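(* Let $\mathcal{S},\mathcal{T},\mathcal{U},\mathcal{B}$ be tile sets consisting only of exact tiles, with mutually consistent frequencies. Then \[ d(\mathcal{T},\mathcal{U};\mathcal{B})\le d(\mathcal{T},\mathcal{S};\mathcal{B})+d(\mathcal{S},\mathcal{U};\mathcal{B}). \]
   Context: Fix $n,m\ge1$; $\mathcal{D}$ is the set of $n\times m$ binary matrices. A tile is $T=(t(T),a(T))$ with nonempty $t(T)\subseteq\{1..n\}$, $a(T)\subseteq\{1..m\}$, $\mathrm{area}(T)=t(T)\times a(T)$. $\mathrm{fr}(T;D)=\frac1{|\mathrm{area}(T)|}\sum_{(i,j)\in\mathrm{area}(T)}D(i,j)$, $\mathrm{fr}(T;p)=\sum_Dp(D)\mathrm{fr}(T;D)$. Each tile carries a target frequency $\alpha_T$; tile sets are consistent if some distribution on $\mathcal{D}$ attains all target frequencies simultaneously. For a tile set $\mathcal{T}$, $p^*_{\mathcal{T}}$ is the entropy-maximising distribution among those with $\mathrm{fr}(T;p)=\alpha_T$ for all $T\in\mathcal{T}$. $\mathrm{KL}(\mathcal{T}\|\mathcal{U})=\mathrm{KL}(p^*_{\mathcal{T}}\|p^*_{\mathcal{U}})$. A tile is exact if its frequency is $0$ or $1$. With $\mathcal{M}=\mathcal{T}\cup\mathcal{U}\cup\mathcal{B}$, $d(\mathcal{T},\mathcal{U};\mathcal{B})=\frac{\mathrm{KL}(\mathcal{M}\|\mathcal{U}\cup\mathcal{B})+\mathrm{KL}(\mathcal{M}\|\mathcal{T}\cup\mathcal{B})}{\mathrm{KL}(\mathcal{M}\|\mathcal{B})}$,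 defined as $1$ if $\mathrm{KL}(\mathcal{M}\|\mathcal{B})=0$. *)

From mathcomp Require Import all_boot.
From Stdlib Require Import Reals ClassicalEpsilon.
Set Implicit Arguments. Unset Strict Implicit. Unset Printing Implicit Defensive.

Open Scope R_scope.

Definition Mat (n m : nat) := {ffun 'I_n * 'I_m -> bool}.

(* A tile: a set of rows t(T), a set of columns a(T), and a target frequency. *)
Record tile (n m : nat) := Tile {
  trows : {set 'I_n};
  tcols : {set 'I_m};
  talpha : R }.

(* a tile set is a finite list of tiles; union of tile sets = concatenation *)
Definition tileset (n m : nat) := seq (tile n m).

Definition tileset_wf n m (TS : tileset n m) : Prop :=
  forall T, List.In T TS -> trows T != set0 /\ tcols T != set0.

Definition tileset_exact n m (TS : tileset n m) : Prop :=
  forall T, List.In T TS -> talpha T = 0 \/ talpha T = 1.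

Definition sumM n m (f : Mat n m -> R) : R := \big[Rplus/0]_(D : Mat n m) f D.

Definition fr n m (T : tile n m) (D : Mat n m) : R :=
  / INR (muln #|trows T| #|tcols T|) *
  \big[Rplus/0]_(ij in setX (trows T) (tcols T)) (if D ij then 1 else 0).

Definition is_distr n m (p : Mat n m -> R) : Prop :=
  (forall D, 0 <= p D) /\ sumM p = 1.

Definition frp n m (T : tile n m) (p : Mat n m -> R) : R :=
  sumM (fun D => p D * fr T D).

Definition feasible n m (TS : tileset n m) (p : Mat n m -> R) : Prop :=
  is_distr p /\ forall T, List.In T TS -> frp T p = talpha T.

Definition consistent n m (TS : tileset n m) : Prop := exists p, feasible TS p.

Definition xlnx (x : R) : R := if Rle_dec x 0 then 0 else x * ln x.

Definition entropy n m (p : Mat n m -> R) : R := - sumM (fun D => xlnx (p D)).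

Definition is_maxent n m (TS : tileset n m) (p : Mat n m -> R) : Prop :=
  feasible TS p /\ forall q, feasible TS q -> entropy q <= entropy p.

(* p*_TS : the entropy-maximising feasible distribution (chosen by epsilon;
   it exists and is unique whenever TS is consistent). *)
Definition pstar n m (TS : tileset n m) : Mat n m -> R :=
  epsilon (inhabits (fun _ : Mat n m => 0)) (is_maxent TS).

Definition KLd n m (p q : Mat n m -> R) : R :=
  sumM (fun D => if Rle_dec (p D) 0 then 0 else p D * ln (p D / q D)).

Definition KL n m (TS US : tileset n m) : R := KLd (pstar TS) (pstar US).

Definition dtile n m (TT UU BB : tileset n m) : R :=
  let MM := TT ++ UU ++ BB in
  let k := KL MM BB in
  if Req_EM_T k 0 then 1
  else (KL MM (UU ++ BB) + KL MM (TT ++ BB)) / k.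

From HB Require Import structures.
From mathcomp Require Import all_boot.
From Stdlib Require Import Reals Lra Psatz ClassicalEpsilon FunctionalExtensionality.
Set Implicit Arguments. Unset Strict Implicit. Unset Printing Implicit Defensive.
Open Scope R_scope.

(* With exact tiles, every matrix in the support of a feasible distribution
   agrees with one fixed realisation D0 on the cells covered by the tiles.  The
   maximum-entropy distribution is therefore uniform on the completions of D0,
   so KL(M || Y) = |cells covered by M but not by Y| ln 2, and d(T,U;B) is the
   Jaccard distance |A Δ C| / |A ∪ C| between the sets A, C of cells covered by
   T, resp. U, but not by B.  The Jaccard distance satisfies the triangle
   inequality: adding the elements of S outside A ∪ C to the numerator and the
   denominator of d(A,C) can only increase it, and the resulting fraction, with
   denominator |A ∪ S ∪ C|, is at most d(A,S) + d(S,C). *)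

HB.instance Definition _ := Monoid.isComLaw.Build R 0 Rplus
  (fun a b c => esym (Rplus_assoc a b c)) Rplus_comm Rplus_0_l.

Section RealSums.
Variable I : finType.
Implicit Types (P : pred I) (f g : I -> R) (A : {set I}).

Lemma sumR_ge0 P f : (forall i, 0 <= f i) -> 0 <= \big[Rplus/0]_(i | P i) f i.
Proof. by move=> f_ge0; elim/big_ind: _ => //; [lra | move=> *; lra]. Qed.

Lemma sumR_eq0 f :
  (forall i, 0 <= f i) -> \big[Rplus/0]_i f i = 0 -> forall i, f i = 0.
Proof.
move=> f_ge0 + i; rewrite (bigD1 i) //=.
have := sumR_ge0 (fun j => j != i) f_ge0; have := f_ge0 i; lra.
Qed.

Lemma sumR_sub f g :
  \big[Rplus/0]_i (f i - g i) = \big[Rplus/0]_i f i - \big[Rplus/0]_i g i.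
Proof.
rewrite /Rminus big_split /=; congr (_ + _).
by elim/big_rec2: _ => [|i x y _ ->]; lra.
Qed.

Lemma sumR_scal c f : \big[Rplus/0]_i (c * f i) = c * \big[Rplus/0]_i f i.
Proof. by elim/big_rec2: _ => [|i x y _ ->]; lra. Qed.

Lemma sumR_if_set A c :
  \big[Rplus/0]_i (if i \in A then c else 0) = INR #|A| * c.
Proof.
rewrite -big_mkcond big_const; elim: #|A| => [|k IHk]; first by rewrite /=; lra.
by rewrite iterS IHk S_INR /=; lra.
Qed.

End RealSums.

Lemma card_indicator (T : finType) (A : {set T}) : #|A| = (\sum_x (x \in A))%nat.
Proof. by rewrite -sum1_card big_mkcond. Qed.

Lemma INR_leq (a b : nat) : (a <= b)%nat -> INR a <= INR b.
Proof. by move=> /leP; apply: le_INR. Qed.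

Lemma INR_card_gt0 (T : finType) (A : {set T}) : A != set0 -> 0 < INR #|A|.
Proof. by move=> A0; apply: lt_0_INR; apply/ltP; rewrite card_gt0. Qed.

Lemma Rdiv_le_cross a b c d : 0 < b -> 0 < d -> a * d <= c * b -> a / b <= c / d.
Proof.
move=> b0 d0 h; have ib := Rinv_0_lt_compat _ b0; have id := Rinv_0_lt_compat _ d0.
have : 0 <= (c * b - a * d) * (/ b * / d) by apply: Rmult_le_pos; nra.
have -> : (c * b - a * d) * (/ b * / d) = c / d - a / b by field; split; lra.
lra.
Qed.

Definition jaccard_dist (T : finType) (A C : {set T}) : R :=
  if A :|: C == set0 then 1
  else (INR #|A :\: C| + INR #|C :\: A|) / INR #|A :|: C|.

Section Jaccard.
Variable T : finType.
Implicit Types A S C : {set T}.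

Lemma card_setD2_le A C : (#|A :\: C| + #|C :\: A| <= #|A :|: C|)%nat.
Proof.
rewrite !card_indicator -big_split; apply: leq_sum => x _.
by rewrite !inE; case: (x \in A); case: (x \in C).
Qed.

Lemma card_setD2_triangle A S C :
  (#|A :\: C| + #|C :\: A| + #|S :\: (A :|: C)|
     <= (#|A :\: S| + #|S :\: A|) + (#|S :\: C| + #|C :\: S|))%nat.
Proof.
rewrite !card_indicator -!big_split; apply: leq_sum => x _.
by rewrite !inE; case: (x \in A); case: (x \in S); case: (x \in C).
Qed.

Lemma card_setU_setD A S C :
  (#|A :|: C| + #|S :\: (A :|: C)| = #|A :|: S :|: C|)%nat.
Proof.
rewrite !card_indicator -!big_split; apply: eq_bigr => x _.
by rewrite !inE; case: (x \in A); case: (x \in S); case: (x \in C).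
Qed.

Lemma jaccard_dist_ge0 A C : 0 <= jaccard_dist A C.
Proof.
rewrite /jaccard_dist; case: ifPn => AC0; first lra.
apply: Rmult_le_pos; first by have := pos_INR #|A :\: C|; have := pos_INR #|C :\: A|; lra.
exact/Rlt_le/Rinv_0_lt_compat/INR_card_gt0.
Qed.

Lemma jaccard_dist_le1 A C : jaccard_dist A C <= 1.
Proof.
rewrite /jaccard_dist; case: ifPn => AC0; first lra.
have ACpos := INR_card_gt0 AC0.
have -> : 1 = INR #|A :|: C| / INR #|A :|: C| by field; lra.
apply: Rdiv_le_cross => //; apply: Rmult_le_compat_r; first lra.
by rewrite -plus_INR; apply/INR_leq/card_setD2_le.
Qed.

Lemma jaccard_dist0l S : jaccard_dist set0 S = 1.
Proof.
rewrite /jaccard_dist set0U set0D setD0 cards0; case: ifPn => S0 //.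
by have := INR_card_gt0 S0; move=> S_pos /=; field; lra.
Qed.

Lemma jaccard_dist_scaled A C k : 0 < k ->
  (if Req_EM_T (INR #|A :|: C| * k) 0 then 1
   else (INR #|A :\: C| * k + INR #|C :\: A| * k) / (INR #|A :|: C| * k))
  = jaccard_dist A C.
Proof.
move=> k0; rewrite /jaccard_dist; have [-> | AC0] := eqVneq (A :|: C) set0.
  by rewrite cards0 Rmult_0_l; case: Req_EM_T.
have AC_pos := INR_card_gt0 AC0.
by case: Req_EM_T => h /=; [nra | field; lra].
Qed.

Lemma ratio_triangle a x s p y q z :
  0 < x -> 0 <= s -> a <= x -> a + s <= p + q -> 0 <= p -> 0 <= q ->
  0 < y <= x + s -> 0 < z <= x + s -> a / x <= p / y + q / z.
Proof.
move=> x0 s0 ax asp p0 q0 [y0 yu] [z0 zu].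
have mediant : a / x <= (a + s) / (x + s) by apply: Rdiv_le_cross; nra.
have split_num : (a + s) / (x + s) <= p / (x + s) + q / (x + s).
  have -> : p / (x + s) + q / (x + s) = (p + q) / (x + s) by field; lra.
  by apply: Rdiv_le_cross; nra.
have py : p / (x + s) <= p / y by apply: Rdiv_le_cross; nra.
have qz : q / (x + s) <= q / z by apply: Rdiv_le_cross; nra.
lra.
Qed.

Lemma jaccard_dist_triangle A S C :
  jaccard_dist A C <= jaccard_dist A S + jaccard_dist S C.
Proof.
have AS_ge0 := jaccard_dist_ge0 A S; have SC_ge0 := jaccard_dist_ge0 S C.
have AC_le1 := jaccard_dist_le1 A C.
case AC0: (A :|: C == set0).
  move: AC0 AS_ge0 SC_ge0 AC_le1; rewrite setU_eq0 => /andP[/eqP-> _].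
  rewrite jaccard_dist0l; lra.
case AS0: (A :|: S == set0).
  have AS1 : jaccard_dist A S = 1 by rewrite /jaccard_dist AS0.
  lra.
case SC0: (S :|: C == set0).
  have SC1 : jaccard_dist S C = 1 by rewrite /jaccard_dist SC0.
  lra.
rewrite /jaccard_dist AC0 AS0 SC0.
have cover := card_setU_setD A S C.
apply: (ratio_triangle (s := INR #|S :\: (A :|: C)|)).
- by apply: INR_card_gt0; rewrite AC0.
- exact: pos_INR.
- by rewrite -plus_INR; apply/INR_leq/card_setD2_le.
- by rewrite -!plus_INR; apply/INR_leq/card_setD2_triangle.
- by have := pos_INR #|A :\: S|; have := pos_INR #|S :\: A|; lra.
- by have := pos_INR #|S :\: C|; have := pos_INR #|C :\: S|; lra.
- split; first by apply: INR_card_gt0; rewrite AS0.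
  by rewrite -plus_INR plusE cover; apply/INR_leq/subset_leq_card; rewrite subsetUl.
- split; first by apply: INR_card_gt0; rewrite SC0.
  rewrite -plus_INR plusE cover -setUA.
  by apply/INR_leq/subset_leq_card; rewrite subsetUr.
Qed.

End Jaccard.

Lemma ln_lt_sub1 x : 0 < x -> x <> 1 -> ln x < x - 1.
Proof.
move=> x0 x1; have ln0 : ln x <> 0.
  by move=> ln0; apply: x1; rewrite -(exp_ln x x0) ln0 exp_0.
by have := exp_ineq1 _ ln0; rewrite exp_ln //; lra.
Qed.

Lemma xlnx0 : xlnx 0 = 0.
Proof. by rewrite /xlnx; case: Rle_dec => // h; lra. Qed.

Lemma xlnx_pos x : 0 < x -> xlnx x = x * ln x.
Proof. by move=> x0; rewrite /xlnx; case: Rle_dec => h //; lra. Qed.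

Lemma gibbs_lt q u : 0 <= q -> 0 < u -> q <> u -> q * ln u - xlnx q < u - q.
Proof.
move=> q0 u0 qu; case: (Req_dec q 0) => [-> | qn0]; first by rewrite xlnx0; lra.
have qpos : 0 < q by lra.
have uq_pos : 0 < u / q by apply: Rdiv_lt_0_compat.
have ln_uq : ln (u / q) = ln u - ln q.
  by rewrite ln_mult ?ln_Rinv //; apply: Rinv_0_lt_compat.
have uq1 : u / q <> 1.
  move=> uq1; apply: qu; have -> : u = u / q * q by field.
  by rewrite uq1; ring.
have := ln_lt_sub1 uq_pos uq1; rewrite ln_uq xlnx_pos // => lt_uq.
have -> : u - q = q * (u / q - 1) by field.
by rewrite -Rmult_minus_distr_l; apply: Rmult_lt_compat_l.
Qed.

Lemma gibbs_le q u : 0 <= q -> 0 < u -> q * ln u - xlnx q <= u - q.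
Proof.
move=> q0 u0; case: (Req_dec q u) => [-> | qu]; last by apply/Rlt_le/gibbs_lt.
by rewrite xlnx_pos //; lra.
Qed.

Section ExactTiles.
Variables n m : nat.
Implicit Types (T : tile n m) (X Y : tileset n m) (D : Mat n m) (p q : Mat n m -> R)
  (A B : {set Mat n m}).

(* Restated for sumM: rewriting with the generic lemmas would produce a card
   #|A| whose finType instance differs syntactically from the one in
   {set Mat n m}, which ring/field/lra then treat as a different atom. *)
Lemma sumM_if_set (A : {set Mat n m}) c :
  sumM (fun D => if D \in A then c else 0) = INR #|A| * c.
Proof. exact: sumR_if_set. Qed.

Lemma sumM_sub (f g : Mat n m -> R) : sumM (fun D => f D - g D) = sumM f - sumM g.
Proof. exact: sumR_sub. Qed.

Lemma sumM_scal c (f : Mat n m -> R) : sumM (fun D => c * f D) = c * sumM f.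
Proof. exact: sumR_scal. Qed.


Definition area T : {set 'I_n * 'I_m} := setX (trows T) (tcols T).

Definition ones T D : {set 'I_n * 'I_m} := [set c in area T | D c].

Lemma ones_sub T D : ones T D \subset area T.
Proof. by apply/subsetP => c; rewrite inE => /andP[]. Qed.

Lemma fr_ones T D : fr T D = INR #|ones T D| / INR #|area T|.
Proof.
rewrite /fr /area -cardsX Rmult_comm; congr (_ / _).
rewrite -[INR _]Rmult_1_r -sumR_if_set big_mkcond /=.
by apply: eq_bigr => c _; rewrite /ones /area !inE; case: (_ && _).
Qed.

Lemma fr_bounds T D : 0 <= fr T D <= 1.
Proof.
rewrite fr_ones; have le_ones := INR_leq (subset_leq_card (ones_sub T D)).
have := pos_INR #|ones T D|.
case: (Req_dec (INR #|area T|) 0) => [-> | area0].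
  by rewrite /Rdiv Rinv_0; lra.
have area_pos : 0 < INR #|area T| by have := pos_INR #|area T|; lra.
have := Rinv_0_lt_compat _ area_pos.
have : INR #|area T| * / INR #|area T| = 1 by field.
rewrite /Rdiv; nra.
Qed.

Lemma fr_eq0 T D : fr T D = 0 -> forall c, c \in area T -> D c = false.
Proof.
rewrite fr_ones => fr0 c cT; apply/negP => Dc.
have ones_pos : 0 < INR #|ones T D|.
  by apply: INR_card_gt0; apply/set0Pn; exists c; rewrite inE cT.
have le_ones := INR_leq (subset_leq_card (ones_sub T D)).
have : 0 < INR #|ones T D| / INR #|area T| by apply: Rdiv_lt_0_compat; lra.
lra.
Qed.

Lemma fr_eq1 T D : fr T D = 1 -> forall c, c \in area T -> D c = true.
Proof.
rewrite fr_ones => fr1 c cT.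
have area0 : INR #|area T| <> 0.
  by move=> area0; rewrite area0 /Rdiv Rinv_0 Rmult_0_r in fr1; lra.
have /INR_eq card_ones : INR #|ones T D| = INR #|area T|.
  have -> : INR #|ones T D| = INR #|ones T D| / INR #|area T| * INR #|area T| by field.
  by rewrite fr1 Rmult_1_l.
have /eqP ones_area : ones T D == area T by rewrite eqEcard ones_sub card_ones leqnn.
by move: cT; rewrite -ones_area inE => /andP[].
Qed.

Lemma fr_agree T D D' : {in area T, D =1 D'} -> fr T D = fr T D'.
Proof.
move=> DD'; rewrite !fr_ones (_ : ones T D = ones T D') //; apply/setP => c.
by move: (DD' c); rewrite !inE; case: (c.1 \in _); case: (c.2 \in _) => //= ->.
Qed.

Definition realises X D := forall T, List.In T X -> fr T D = talpha T.

Definition covered X : {set 'I_n * 'I_m} := \bigcup_(T <- X) area T.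

Definition agreeing X D0 : {set Mat n m} :=
  [set D : Mat n m | [forall c in covered X, D c == D0 c]].

Lemma coveredP X c : c \in covered X <-> exists2 T, List.In T X & c \in area T.
Proof.
rewrite /covered; elim: X => [|T X IHX]; first by rewrite big_nil inE; split=> // [[]].
rewrite big_cons inE; split.
- case/orP => [cT | /IHX [T' XT' cT']]; first by exists T; first left.
  by exists T'; first right.
- case=> T' [<- | XT'] cT'; apply/orP; first by left.
  by right; apply/IHX; exists T'.
Qed.

Lemma covered_cat X Y : covered (X ++ Y) = covered X :|: covered Y.
Proof. by rewrite /covered big_cat. Qed.

Lemma covered_incl X Y : List.incl X Y -> covered X \subset covered Y.
Proof.
move=> XY; apply/subsetP => c /coveredP [T XT cT].
by apply/coveredP; exists T; first exact: XY.
Qed.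

Lemma agreeingP X D0 D : reflect {in covered X, D =1 D0} (D \in agreeing X D0).
Proof. by rewrite inE; apply: (iffP forall_inP) => DD0 c /DD0 /eqP. Qed.

Lemma agreeing_neq0 X D0 : agreeing X D0 != set0.
Proof. by apply/set0Pn; exists D0; apply/agreeingP. Qed.

Lemma realises_agreeing X D0 D :
  realises X D0 -> D \in agreeing X D0 -> realises X D.
Proof.
move=> XD0 /agreeingP DD0 T XT; rewrite -(XD0 T XT); apply: fr_agree => c cT.
by apply: DD0; apply/coveredP; exists T.
Qed.

Lemma exact_realises_agreeing X D0 D :
  tileset_exact X -> realises X D0 -> realises X D -> D \in agreeing X D0.
Proof.
move=> EX XD0 XD; apply/agreeingP => c /coveredP [T XT cT].
have := XD T XT; have := XD0 T XT.
case: (EX T XT) => ->.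
- by move=> /fr_eq0 /(_ c cT) -> /fr_eq0 /(_ c cT) ->.
- by move=> /fr_eq1 /(_ c cT) -> /fr_eq1 /(_ c cT) ->.
Qed.

Lemma distr_pos p : is_distr p -> exists D, 0 < p D.
Proof.
move=> [p_ge0 p_sum]; apply: NNPP => no_pos.
suff : sumM p = 0 by lra.
apply: big1 => D _; have := p_ge0 D.
by case=> // pD; case: no_pos; exists D.
Qed.

Lemma feasible_realises X p D :
  tileset_exact X -> feasible X p -> 0 < p D -> realises X D.
Proof.
move=> EX [[p_ge0 p_sum] frpX] pD T XT; have frT := frpX T XT; rewrite /frp in frT.
have [fr_ge0 fr_le1] := fr_bounds T D.
case: (EX T XT) => alpha; rewrite alpha in frT *.
- have pfr_ge0 D' : 0 <= p D' * fr T D' by have := fr_bounds T D'; have := p_ge0 D'; nra.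
  have := sumR_eq0 pfr_ge0 frT D; nra.
- have pfr_ge0 D' : 0 <= p D' * (1 - fr T D').
    by have := fr_bounds T D'; have := p_ge0 D'; nra.
  have sum0 : sumM (fun D' => p D' * (1 - fr T D')) = 0.
    have -> : (fun D' => p D' * (1 - fr T D')) = fun D' => p D' - p D' * fr T D'.
      by apply: functional_extensionality => D'; ring.
    by rewrite sumM_sub p_sum frT; lra.
  have := sumR_eq0 pfr_ge0 sum0 D; nra.
Qed.

Definition unif (A : {set Mat n m}) D : R := if D \in A then / INR #|A| else 0.

Lemma unif_distr A : A != set0 -> is_distr (unif A).
Proof.
move=> A0; have A_pos := INR_card_gt0 A0; split.
  by move=> D; rewrite /unif; case: (D \in A); [apply/Rlt_le/Rinv_0_lt_compat | lra].
by rewrite /unif sumM_if_set; field; lra.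
Qed.

Lemma unif_agreeing_feasible X D0 : realises X D0 -> feasible X (unif (agreeing X D0)).
Proof.
move=> XD0; split; first exact/unif_distr/agreeing_neq0.
set A := agreeing X D0; move=> T XT; rewrite /frp.
have -> : (fun D => unif A D * fr T D) =
          fun D => if D \in A then / INR #|A| * talpha T else 0.
  apply: functional_extensionality => D; rewrite /unif.
  by case: ifP => DA; [rewrite (realises_agreeing XD0 DA XT) | ring].
rewrite sumM_if_set -Rmult_assoc Rinv_r ?Rmult_1_l //.
exact/Rgt_not_eq/INR_card_gt0/agreeing_neq0.
Qed.

Lemma entropy_unif A : A != set0 -> entropy (unif A) = ln (INR #|A|).
Proof.
move=> A0; have A_pos := INR_card_gt0 A0; rewrite /entropy.
have -> : (fun D => xlnx (unif A D)) =
          fun D => if D \in A then / INR #|A| * ln (/ INR #|A|) else 0.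
  apply: functional_extensionality => D; rewrite /unif.
  by case: ifP => _; [apply/xlnx_pos/Rinv_0_lt_compat | apply: xlnx0].
by rewrite sumM_if_set ln_Rinv //; field; lra.
Qed.

Section Gibbs.
Variables (A : {set Mat n m}) (q : Mat n m -> R).
Hypotheses (q_distr : is_distr q) (q_supp : forall D, 0 < q D -> D \in A).

Let q_ge0 D : 0 <= q D. Proof. exact: q_distr.1. Qed.

Let q_out D : D \notin A -> q D = 0.
Proof. by move=> DA; case: (q_ge0 D) => // /q_supp qD; rewrite qD in DA. Qed.

Let A0 : A != set0.
Proof. by have [D /q_supp DA] := distr_pos q_distr; apply/set0Pn; exists D. Qed.

Definition gibbs_gap D := unif A D - q D - (ln (/ INR #|A|) * q D - xlnx (q D)).

Lemma gibbs_gap_ge0 D : 0 <= gibbs_gap D.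
Proof.
rewrite /gibbs_gap /unif; case: ifPn => DA; last by rewrite q_out // xlnx0; lra.
have := gibbs_le (q_ge0 D) (Rinv_0_lt_compat _ (INR_card_gt0 A0)); lra.
Qed.

Lemma sum_gibbs_gap : sumM gibbs_gap = ln (INR #|A|) - entropy q.
Proof.
rewrite /gibbs_gap !sumM_sub sumM_scal (unif_distr A0).2 q_distr.2 /entropy.
by rewrite ln_Rinv; [ring | exact: INR_card_gt0].
Qed.

Lemma entropy_le_ln_card : entropy q <= ln (INR #|A|).
Proof.
by have := sumR_ge0 predT gibbs_gap_ge0; rewrite -/(sumM _) sum_gibbs_gap; lra.
Qed.

Lemma entropy_eq_ln_card : entropy q = ln (INR #|A|) -> q = unif A.
Proof.
move=> Hq; have gap_sum0 : sumM gibbs_gap = 0 by rewrite sum_gibbs_gap Hq; ring.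
have gap0 := sumR_eq0 gibbs_gap_ge0 gap_sum0.
apply: functional_extensionality => D; have := gap0 D; rewrite /gibbs_gap.
case: (Req_dec (q D) (unif A D)) => // qu; rewrite /unif in qu *.
case: ifPn => DA in qu *; last by rewrite q_out in qu.
by have := gibbs_lt (q_ge0 D) (Rinv_0_lt_compat _ (INR_card_gt0 A0)) qu; lra.
Qed.

End Gibbs.

Lemma pstar_agreeing X D0 :
  tileset_exact X -> realises X D0 -> pstar X = unif (agreeing X D0).
Proof.
move=> EX XD0; set A := agreeing X D0.
have A0 : A != set0 by apply: agreeing_neq0.
have supp p : feasible X p -> forall D, 0 < p D -> D \in A.
  by move=> Fp D pD; apply: exact_realises_agreeing (feasible_realises EX Fp pD).
have unif_maxent : is_maxent X (unif A).
  split=> [|q Fq]; first exact: unif_agreeing_feasible.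
  by rewrite entropy_unif //; apply: entropy_le_ln_card (proj1 Fq) (supp q Fq).
have [Fp p_max] : is_maxent X (pstar X) by apply: epsilon_spec; exists (unif A).
apply: entropy_eq_ln_card (proj1 Fp) (supp _ Fp) _.
have := p_max _ unif_maxent.1; have := entropy_le_ln_card (proj1 Fp) (supp _ Fp).
by rewrite entropy_unif //; lra.
Qed.

Lemma KLd_unif A B :
  A != set0 -> A \subset B -> KLd (unif A) (unif B) = ln (INR #|B|) - ln (INR #|A|).
Proof.
move=> A0 AB; have B0 : B != set0.
  by apply: contraNneq A0 => B0; rewrite -subset0 -B0.
have A_pos := INR_card_gt0 A0; have B_pos := INR_card_gt0 B0.
rewrite /KLd (_ : (fun D => _) = fun D =>
  if D \in A then / INR #|A| * (ln (INR #|B|) - ln (INR #|A|)) else 0).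
  by rewrite sumM_if_set; field; lra.
apply: functional_extensionality => D; rewrite /unif.
have [DA | _] := boolP (D \in A); last by case: Rle_dec => // h; lra.
rewrite (subsetP AB D DA); case: Rle_dec => h /=.
  by have := Rinv_0_lt_compat _ A_pos; lra.
rewrite /Rdiv Rinv_inv ln_mult ?ln_Rinv //; [ring | exact: Rinv_0_lt_compat].
Qed.

Lemma card_agreeing X D0 : #|agreeing X D0| = expn 2 #|~: covered X|.
Proof.
pose flip (D : Mat n m) : Mat n m := [ffun c => D c != D0 c].
have flipK : involutive flip.
  by move=> D; apply/ffunP => c; rewrite !ffunE; case: (D c); case: (D0 c).
rewrite -card_bool -(card_pffun_on false (~: covered X) predT).
rewrite -(card_imset _ (inv_inj flipK)); apply: eq_card => f.
apply/imsetP/pffun_onP => [[D /agreeingP DD0 ->] | [supp _]].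
  split=> //; apply/subsetP => c; rewrite !inE ffunE; apply: contra => cX.
  by rewrite DD0 ?eqxx.
exists (flip f); last by rewrite flipK.
apply/agreeingP => c cX; rewrite ffunE.
have -> : f c = false.
  by apply/negP => fc; move: (subsetP supp c); rewrite !inE fc cX => /(_ isT).
by case: (D0 c).
Qed.

Lemma ln_card_agreeing X D0 : ln (INR #|agreeing X D0|) = INR #|~: covered X| * ln 2.
Proof.
rewrite card_agreeing -ln_pow; last lra.
by congr ln; elim: #|_| => [|k IHk] //; rewrite expnS mulnE mult_INR IHk.
Qed.

Lemma exact_cat X Y : tileset_exact X -> tileset_exact Y -> tileset_exact (X ++ Y).
Proof.
by move=> EX EY T XYT; case: (List.in_app_or _ _ _ XYT); [apply: EX | apply: EY].
Qed.

Lemma exact_incl X Y : List.incl X Y -> tileset_exact Y -> tileset_exact X.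
Proof. by move=> XY EY T /XY /EY. Qed.

Lemma realises_incl X Y D : List.incl X Y -> realises Y D -> realises X D.
Proof. by move=> XY YD T /XY /YD. Qed.

Lemma KL_exact M Y D0 : tileset_exact M -> realises M D0 -> List.incl Y M ->
  KL M Y = INR #|covered M :\: covered Y| * ln 2.
Proof.
move=> EM MD0 YM; have EY := exact_incl YM EM; have YD0 := realises_incl YM MD0.
have cYM := covered_incl YM.
rewrite /KL (pstar_agreeing EM MD0) (pstar_agreeing EY YD0) KLd_unif; first last.
- apply/subsetP => D /agreeingP DD0; apply/agreeingP => c cY.
  exact/DD0/(subsetP cYM).
- exact: agreeing_neq0.
have uncovered : #|~: covered Y| = (#|~: covered M| + #|covered M :\: covered Y|)%nat.
  rewrite !card_indicator -big_split; apply: eq_bigr => c _; rewrite !inE.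
  by have := subsetP cYM c; case: (c \in covered Y); case: (c \in covered M) => // ->.
by rewrite !ln_card_agreeing uncovered plus_INR; ring.
Qed.

Lemma dtile_jaccard D0 TT UU BB :
  tileset_exact (TT ++ UU ++ BB) -> realises (TT ++ UU ++ BB) D0 ->
  dtile TT UU BB = jaccard_dist (covered TT :\: covered BB) (covered UU :\: covered BB).
Proof.
move=> EM MD0; rewrite /dtile /= !(KL_exact EM MD0); first last.
- by move=> T; rewrite !List.in_app_iff; tauto.
- by move=> T; rewrite !List.in_app_iff; tauto.
- by move=> T; rewrite !List.in_app_iff; tauto.
rewrite !covered_cat.
set t := covered TT; set u := covered UU; set b := covered BB.
have -> : (t :|: (u :|: b)) :\: (u :|: b) = (t :\: b) :\: (u :\: b).
  by apply/setP => c; rewrite !inE; case: (c \in t); case: (c \in u); case: (c \in b).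
have -> : (t :|: (u :|: b)) :\: (t :|: b) = (u :\: b) :\: (t :\: b).
  by apply/setP => c; rewrite !inE; case: (c \in t); case: (c \in u); case: (c \in b).
have -> : (t :|: (u :|: b)) :\: b = (t :\: b) :|: (u :\: b).
  by apply/setP => c; rewrite !inE; case: (c \in t); case: (c \in u); case: (c \in b).
apply: jaccard_dist_scaled; rewrite -ln_1; apply: ln_increasing; lra.
Qed.

End ExactTiles.

Theorem theorem8 (n m : nat) (SS TT UU BB : tileset n m) :
  leq 1 n -> leq 1 m ->
  tileset_wf SS -> tileset_wf TT -> tileset_wf UU -> tileset_wf BB ->
  tileset_exact SS -> tileset_exact TT -> tileset_exact UU -> tileset_exact BB ->
  consistent (SS ++ TT ++ UU ++ BB) ->
  dtile TT UU BB <= dtile TT SS BB + dtile SS UU BB.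
Proof.
move=> _ _ _ _ _ _ ES ET EU EB [p Fp].
have E : tileset_exact (SS ++ TT ++ UU ++ BB) by do !apply: exact_cat.
have [D0 pD0] := distr_pos Fp.1.
have RD0 := feasible_realises E Fp pD0.
have dtileE X Y : List.incl (X ++ Y ++ BB) (SS ++ TT ++ UU ++ BB) ->
    dtile X Y BB = jaccard_dist (covered X :\: covered BB) (covered Y :\: covered BB).
  by move=> XY; apply: dtile_jaccard (exact_incl XY E) (realises_incl XY RD0).
rewrite !dtileE; first exact: jaccard_dist_triangle.
all: by move=> T; rewrite !List.in_app_iff; tauto.
Qed.
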